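(* In the algorithm Mono-DMFW described in the context, let $\bar{\mathbf{x}}^{(k)}(q)=\frac1N\sum_{i=1}^N\mathbf{x}_i^{(k)}(q)$. If the weight matrix $\mathbf{A}$ is symmetric and doubly stochastic with $\beta<1$, then for any $k\in[K]$ and $q\in[Q]$, $$\sqrt{\sum_{i=1}^{N}\|\mathbf{x}_{i}^{(k)}(q)-\bar{\mathbf{x}}^{(k)}(q)\|^{2}}\le\frac{\sqrt{N}r(\mathcal{K})}{K(1-\beta)}.$$
   Context: $\mathcal{K}\subseteq\mathbb{R}^n$ is a bounded convex set with $r(\mathcal{K})=\max_{\mathbf{x}\in\mathcal{K}}\|\mathbf{x}\|$. $N$ nodes on a connected undirected graph with neighbor sets $\mathcal{N}_i$; weight matrix $\mathbf{A}=[a_{ij}]\in\mathbb{R}_+^{N\times N}$ with $a_{ij}=0$ if $j\notin\mathcal{N}_i\cup\{i\}$; $\beta=\max(|\lambda_2(\mathbf{A})|,|\lambda_N(\mathbf{A})|)$ for eigenvalues $1=\lambda_1\ge\dots\ge\lambda_N\ge-1$. In Mono-DMFW, for each block $q\in[Q]$, $\mathbf{x}_i^{(0)}(q)=\mathbf{0}$, and for $k=1,\dots,K$ each node $i$ receives a point $\mathbf{v}_i^{(k)}(q)\in\mathcal{K}$ (output of an online linear optimization oracle) and sets $\mathbf{x}_i^{(k)}(q)=\sum_{j\in\mathcal{N}_i\cup\{i\}}a_{ij}\mathbf{x}_j^{(k-1)}(q)+\frac1K\mathbf{v}_i^{(k)}(q)$. *)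

From HB Require Import structures.
From mathcomp Require Import all_boot all_order all_algebra.
Set Implicit Arguments. Unset Strict Implicit. Unset Printing Implicit Defensive.
Import Order.TTheory GRing.Theory Num.Theory.
Local Open Scope ring_scope.

Definition vnorm (R : rcfType) (n : nat) (v : 'rV[R]_n) : R :=
  Num.sqrt (\sum_(j < n) v 0 j ^+ 2).

Definition convex_set (R : rcfType) (n : nat) (K : pred 'rV[R]_n) : Prop :=
  forall x y (t : R), x \in K -> y \in K -> 0 <= t <= 1 ->
    t *: x + (1 - t) *: y \in K.

Definition bounded_set (R : rcfType) (n : nat) (K : pred 'rV[R]_n) : Prop :=
  exists M : R, forall x, x \in K -> vnorm x <= M.

Definition is_max_norm (R : rcfType) (n : nat) (K : pred 'rV[R]_n) (r : R) : Prop :=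
  (exists2 x, x \in K & vnorm x = r) /\ (forall x, x \in K -> vnorm x <= r).

Definition undirected_connected_graph (N : nat) (e : rel 'I_N) : Prop :=
  [/\ symmetric e, irreflexive e & forall i j : 'I_N, connect e i j].

Definition graph_weight_matrix (R : rcfType) (N : nat) (e : rel 'I_N) (A : 'M[R]_N) : Prop :=
  (forall i j, 0 <= A i j) /\ (forall i j, ~~ e i j -> j != i -> A i j = 0).

Definition symmetric_mx (R : rcfType) (N : nat) (A : 'M[R]_N) : Prop := A^T = A.

Definition doubly_stochastic (R : rcfType) (N : nat) (A : 'M[R]_N) : Prop :=
  (forall i j, 0 <= A i j) /\
  (forall i, \sum_(j < N) A i j = 1) /\ (forall j, \sum_(i < N) A i j = 1).

Definition sorted_eigenvalues (R : rcfType) (N : nat) (A : 'M[R]_N) (lam : seq R) : Prop :=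
  [/\ size lam = N, sorted (fun a b => b <= a) lam &
      char_poly A = \prod_(l <- lam) ('X - l%:P)].

(* beta = max(|lambda_2|, |lambda_N|) (1-based indices) *)
Definition beta_of (R : rcfType) (lam : seq R) : R :=
  Num.max `|nth 0 lam 1| `|nth 0 lam (size lam).-1|.

Definition node_avg (R : rcfType) (n N : nat) (x : 'I_N -> 'rV[R]_n) : 'rV[R]_n :=
  N%:R^-1 *: \sum_(i < N) x i.

(* Mono-DMFW iterates: x q k i for block q, step k, node i *)
Definition mono_dmfw_iterates (R : rcfType) (n N Q K : nat) (e : rel 'I_N)
  (A : 'M[R]_N) (v x : 'I_Q -> nat -> 'I_N -> 'rV[R]_n) : Prop :=
  forall q : 'I_Q,
    (forall i, x q 0%N i = 0) /\
    (forall k i, (1 <= k <= K)%N ->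
       x q k i = \sum_(j < N | e i j || (j == i)) A i j *: x q k.-1 j
                 + K%:R^-1 *: v q k i).

From mathcomp Require Import all_boot all_order all_algebra.
From mathcomp Require Import ring lra complex.
Import Order.TTheory GRing.Theory Num.Theory.
Local Open Scope ring_scope.

(* Stack the iterates of block q as the N x n matrix X_t with rows x_i(t), so
   that Mono-DMFW reads X_t = A X_(t-1) + V_t / K.  The centering projection
   J = I - 11^T / N commutes with the doubly stochastic A, hence the consensus
   errors E_t = J X_t satisfy E_t = A E_(t-1) + J V_t / K.  The columns of
   E_(t-1) are orthogonal to the all-ones vector, an eigenvector of the simple
   eigenvalue 1 of the symmetric A; in an orthonormal eigenbasis A therefore
   shrinks them by beta, so ||A E_(t-1)||_F <= beta ||E_(t-1)||_F, while
   ||J V_t||_F <= ||V_t||_F <= sqrt N r(K).  With E_0 = 0 the recurrence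
   e_t <= beta e_(t-1) + sqrt N r(K) / K keeps e_t below its fixed point. *)

Lemma sum_sqr_ge0 {R : realDomainType} {I : finType} (a : I -> R) :
  0 <= \sum_i a i ^+ 2.
Proof. by apply: sumr_ge0 => i _; exact: sqr_ge0. Qed.

Lemma sum_mul_sqr_le {R : realDomainType} {I : finType} (a b : I -> R) :
  (\sum_i a i * b i) ^+ 2 <= (\sum_i a i ^+ 2) * (\sum_i b i ^+ 2).
Proof.
have lagrange : \sum_i \sum_j (a i * b j - a j * b i) ^+ 2 =
    (\sum_i a i ^+ 2) * (\sum_j b j ^+ 2) + (\sum_i b i ^+ 2) * (\sum_j a j ^+ 2)
    - 2 * ((\sum_i a i * b i) * (\sum_j a j * b j)).
  rewrite !big_distrlr mulr_sumr -big_split -sumrB /=.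
  apply: eq_bigr => i _; rewrite mulr_sumr -big_split -sumrB /=.
  by apply: eq_bigr => j _; ring.
have : 0 <= \sum_i \sum_j (a i * b j - a j * b i) ^+ 2.
  by apply: sumr_ge0 => i _; exact: sum_sqr_ge0.
rewrite lagrange [(\sum_i b i ^+ 2) * _]mulrC -expr2.
by move: (_ * _) (_ ^+ 2) => p s; lra.
Qed.

Lemma sqrt_sum_sqrD {R : rcfType} {I : finType} (a b : I -> R) :
  Num.sqrt (\sum_i (a i + b i) ^+ 2) <=
  Num.sqrt (\sum_i a i ^+ 2) + Num.sqrt (\sum_i b i ^+ 2).
Proof.
have cauchy_schwarz : \sum_i a i * b i <= Num.sqrt (\sum_i a i ^+ 2) * Num.sqrt (\sum_i b i ^+ 2).
  rewrite -sqrtrM ?sum_sqr_ge0 //; apply: le_trans (ler_norm _) _.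
  by rewrite -sqrtr_sqr ler_wsqrtr // sum_mul_sqr_le.
have expand : \sum_i (a i + b i) ^+ 2 =
    \sum_i a i ^+ 2 + 2 * (\sum_i a i * b i) + \sum_i b i ^+ 2.
  by rewrite mulr_sumr -!big_split /=; apply: eq_bigr => i _; ring.
rewrite -[X in _ <= X]ger0_norm ?addr_ge0 ?sqrtr_ge0 // -sqrtr_sqr ler_wsqrtr //.
rewrite expand sqrrD !sqr_sqrtr ?sum_sqr_ge0 //.
by move: cauchy_schwarz; set s := _ * _; set c := \sum_i _ * _; lra.
Qed.

Lemma sum_sqr_sub_mean_le {R : realFieldType} {I : finType} (a : I -> R) :
  \sum_i (a i - #|I|%:R^-1 * \sum_j a j) ^+ 2 <= \sum_i a i ^+ 2.
Proof.
set n := #|I|%:R; set S := \sum_j a j; set m := n^-1 * S.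
have [n0|n_neq0] := eqVneq n 0.
  by rewrite /m n0 invr0 mul0r; under eq_bigr do rewrite subr0.
rewrite (eq_bigr (fun i => a i ^+ 2 + (- 2 * m) * a i + m ^+ 2)); last by move=> i _; ring.
rewrite !big_split /= -mulr_sumr sumr_const -/S -mulr_natl -/n.
rewrite -subr_ge0 (_ : _ - _ = n^-1 * S ^+ 2); last by rewrite /m; field.
by rewrite mulr_ge0 ?invr_ge0 ?ler0n ?sqr_ge0.
Qed.

Definition frobenius {R : rcfType} {m n} (M : 'M[R]_(m, n)) :=
  Num.sqrt (\sum_i \sum_j M i j ^+ 2).

Section Frobenius.
Context {R : rcfType}.

Lemma frobenius0 {m n} : frobenius (0 : 'M[R]_(m, n)) = 0.
Proof.
by rewrite /frobenius big1 ?sqrtr0 // => i _; rewrite big1 // => j _; rewrite mxE expr0n.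
Qed.

Lemma frobeniusD {m n} (M M' : 'M[R]_(m, n)) :
  frobenius (M + M') <= frobenius M + frobenius M'.
Proof.
rewrite /frobenius !pair_bigA /=.
rewrite (eq_bigr (fun p => (M p.1 p.2 + M' p.1 p.2) ^+ 2)) => [|p _]; last by rewrite mxE.
exact: sqrt_sum_sqrD.
Qed.

Lemma frobeniusZ {m n} (a : R) (M : 'M[R]_(m, n)) :
  0 <= a -> frobenius (a *: M) = a * frobenius M.
Proof.
move=> a_ge0; rewrite /frobenius -[a in RHS]ger0_norm // -sqrtr_sqr -sqrtrM ?sqr_ge0 //.
rewrite mulr_sumr; congr Num.sqrt; apply: eq_bigr => i _.
by rewrite mulr_sumr; apply: eq_bigr => j _; rewrite mxE exprMn.
Qed.

Lemma frobenius_rows {m n} (M : 'M[R]_(m, n)) :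
  frobenius M = Num.sqrt (\sum_i vnorm (row i M) ^+ 2).
Proof.
congr Num.sqrt; apply: eq_bigr => i _.
by rewrite sqr_sqrtr ?sum_sqr_ge0 //; apply: eq_bigr => j _; rewrite mxE.
Qed.

Lemma frobenius_le_rows {m n} (M : 'M[R]_(m, n)) (r : R) :
  0 <= r -> (forall i, vnorm (row i M) <= r) -> frobenius M <= Num.sqrt m%:R * r.
Proof.
move=> r_ge0 row_le; rewrite frobenius_rows -[r in X in _ <= X]ger0_norm //.
rewrite -sqrtr_sqr -sqrtrM // ler_wsqrtr // mulr_natl.
have -> : r ^+ 2 *+ m = \sum_(i < m) r ^+ 2 by rewrite sumr_const card_ord.
by apply: ler_sum => i _; rewrite lerXn2r ?nnegrE ?sqrtr_ge0.
Qed.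

End Frobenius.

Section Centering.
Context {R : rcfType} {N : nat}.

Definition centering : 'M[R]_N := 1%:M - N%:R^-1 *: const_mx 1.

Lemma centering_mulE {n} (X : 'M[R]_(N, n)) i j :
  (centering *m X) i j = X i j - N%:R^-1 * \sum_k X k j.
Proof.
rewrite mulmxBl mul1mx -scalemxAl !mxE; congr (_ - _ * _).
by apply: eq_bigr => k _; rewrite mxE mul1r.
Qed.

Lemma row_centering_mul {n} (x : 'I_N -> 'rV[R]_n) i :
  row i (centering *m \matrix_j x j) = x i - node_avg x.
Proof.
apply/rowP => j; rewrite mxE centering_mulE !mxE summxE.
by under eq_bigr do rewrite mxE.
Qed.

Lemma doubly_stochastic_centeringC (A : 'M[R]_N) :
  doubly_stochastic A -> centering *m A = A *m centering.
Proof.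
move=> [_ [row_sum col_sum]].
have AJ : A *m const_mx 1 = const_mx 1 *m A.
  apply/matrixP => i j; rewrite !mxE.
  under eq_bigr do rewrite mxE mulr1; under [RHS]eq_bigr do rewrite mxE mul1r.
  by rewrite row_sum col_sum.
by rewrite mulmxBl mulmxBr mul1mx mulmx1 -scalemxAl -scalemxAr AJ.
Qed.

Lemma const1_mul_centering : (0 < N)%N -> (const_mx 1 : 'rV[R]_N) *m centering = 0.
Proof.
move=> N_gt0; apply/rowP => j; rewrite mulmxBr mulmx1 -scalemxAr !mxE.
under eq_bigr do rewrite !mxE mulr1.
by rewrite sumr_const card_ord mulVf ?subrr // pnatr_eq0 -lt0n.
Qed.

Lemma frobenius_centering_le {n} (X : 'M[R]_(N, n)) :
  frobenius (centering *m X) <= frobenius X.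
Proof.
rewrite /frobenius ler_wsqrtr // exchange_big [X in _ <= X]exchange_big /=.
apply: ler_sum => j _; under eq_bigr do rewrite centering_mulE.
by have := sum_sqr_sub_mean_le (fun i => X i j); rewrite card_ord.
Qed.

End Centering.

Lemma char_poly_similar {F : fieldType} {n} (P D : 'M[F]_n) :
  P \in unitmx -> char_poly (invmx P *m D *m P) = char_poly D.
Proof.
move=> P_unit.
have similar_mx : char_poly_mx (invmx P *m D *m P) =
    map_mx polyC (invmx P) *m char_poly_mx D *m map_mx polyC P.
  rewrite /char_poly_mx mulmxBr mulmxBl -!map_mxM; congr (_ - _).
  by rewrite scalar_mxC -mulmxA -map_mxM mulVmx // map_mx1 mulmx1.
rewrite /char_poly similar_mx !det_mulmx !det_map_mx mulrC mulrA -rmorphM -det_mulmx.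
by rewrite mulmxV // det1 mul1r.
Qed.

Lemma char_poly_diag {R : comNzRingType} {n} (d : 'rV[R]_n) :
  char_poly (diag_mx d) = \prod_(i < n) ('X - (d 0 i)%:P).
Proof.
rewrite char_poly_trig ?diag_mx_is_trig //; apply: eq_bigr => i _.
by rewrite mxE eqxx mulr1n.
Qed.

Local Open Scope sesquilinear_scope.
Local Notation "''[' u , v ]" := (dotmx u v) : ring_scope.
Local Notation "''[' u ]" := '[u, u]%R : ring_scope.

Lemma dotmx_unitary {C : numClosedFieldType} {n} {M : 'M[C]_n} (x y : 'rV[C]_n) :
  M \is unitarymx -> '[x *m M, y *m M] = '[x, y].
Proof.
move=> /unitarymxP M_unitary.
by rewrite !dotmxE trmx_mul map_mxM mulmxA -(mulmxA x) M_unitary mulmx1.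
Qed.

Lemma dotmx_sum {C : numClosedFieldType} {n} (x y : 'rV[C]_n) :
  '[x, y] = \sum_i x 0 i * (y 0 i)^*.
Proof. by rewrite dotmxE mxE; apply: eq_bigr => i _; rewrite !mxE. Qed.

Section NormalContraction.
Context {C : numClosedFieldType} {N : nat} {A : 'M[C]_N}.
Context {l0 b mu : C} {lc : seq C} {u : 'rV[C]_N}.
Hypotheses (A_normal : A \is normalmx)
  (A_char : char_poly A = \prod_(l <- l0 :: lc) ('X - l%:P))
  (lc_small : {in lc, forall l, `|l| <= b}) (mu_large : b < `|mu|)
  (u_eigen : u *m A = mu *: u) (u_neq0 : u != 0).

Let P := spectralmx A.
Let d := spectral_diag A.
Let P_unitary : P \is unitarymx := spectral_unitarymx A.
Let Pt_unitary : P^t* \is unitarymx. Proof. by rewrite trmxC_unitary. Qed.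

Let A_spectral : A = P^t* *m diag_mx d *m P.
Proof. by rewrite -invmx_unitary //; exact/orthomx_spectralP. Qed.

Lemma spectral_diag_perm : perm_eq (l0 :: lc) [seq d 0 k | k <- enum 'I_N].
Proof.
apply: prod_XsubC_eq; rewrite -A_char {1}(orthomx_spectralP A_normal).
by rewrite char_poly_similar ?spectral_unit // char_poly_diag big_map big_enum.
Qed.

Lemma spectral_diag_large_uniq k m : b < `|d 0 k| -> b < `|d 0 m| -> k = m.
Proof.
pose large (l : C) := b < `|l|.
have : (count large (l0 :: lc) <= 1)%N.
  rewrite /=; have -> : count large lc = 0%N.
    apply/eqP; rewrite -leqn0 leqNgt -has_count.
    by apply/hasPn => l /lc_small /le_gtF; rewrite /large => ->.
  by rewrite addn0 leq_b1.
rewrite (permP spectral_diag_perm) count_map -sum1_count big_enum_cond /= sum1_card.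
by move=> /card_le1_eqP uniq_large k_large m_large; apply: uniq_large.
Qed.

Let w := u *m P^t*.

Lemma spectral_coord_eigen m : w 0 m != 0 -> d 0 m = mu.
Proof.
move=> wm_neq0.
have w_eigen : w *m diag_mx d = mu *: w.
  have <- : u *m A *m P^t* = w *m diag_mx d by rewrite A_spectral !mulmxA mulmxtVK.
  by rewrite u_eigen -scalemxAl.
have /rowP/(_ m) := w_eigen; rewrite mul_mx_diag mxE [in RHS]mxE mulrC.
exact: (mulIf wm_neq0).
Qed.

Lemma spectral_coord_ortho (y : 'rV[C]_N) k :
  '[y, u] = 0 -> b < `|d 0 k| -> (y *m P^t*) 0 k = 0.
Proof.
move=> y_ortho k_large.
have w_supp m : m != k -> w 0 m = 0.
  apply: contraNeq => /spectral_coord_eigen dm_mu; apply/eqP.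
  by apply: spectral_diag_large_uniq; rewrite // dm_mu.
have wk_neq0 : w 0 k != 0.
  apply: contra u_neq0 => /eqP wk0.
  have -> : u = w *m P by rewrite mulmxKtV.
  suff -> : w = 0 by rewrite mul0mx.
  by apply/rowP => m; rewrite [RHS]mxE; have [->|/w_supp] := eqVneq m k.
move: y_ortho; rewrite -(dotmx_unitary _ _ Pt_unitary) -/w dotmx_sum (bigD1 k) //=.
rewrite big1 ?addr0 => [|m /w_supp ->]; last by rewrite conjC0 mulr0.
by move=> /eqP; rewrite mulf_eq0 conjC_eq0 (negPf wk_neq0) orbF => /eqP.
Qed.

Lemma normal_contraction (y : 'rV[C]_N) : '[y, u] = 0 -> '[y *m A] <= b ^+ 2 * '[y].
Proof.
move=> y_ortho; set z := y *m P^t*.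
have b_real : b \is Num.real.
  by move: mu_large; rewrite -subr_gt0 => /gtr0_real; rewrite rpredBl ?normr_real.
have z_large k : b < `|d 0 k| -> z 0 k = 0 by exact: spectral_coord_ortho.
rewrite A_spectral !mulmxA -/z (dotmx_unitary _ _ P_unitary).
rewrite -[in X in _ <= _ * X](dotmx_unitary _ _ Pt_unitary) -/z.
clearbody z; rewrite !dotmx_sum mulr_sumr; apply: ler_sum => k _.
rewrite mul_mx_diag mxE rmorphM /= mulrACA -!normCK.
have [dk_le|/z_large ->] := real_leP (normr_real (d 0 k)) b_real; last first.
  by rewrite normr0 expr0n /= mul0r mulr0.
by rewrite mulrC ler_wpM2r ?exprn_ge0 // lerXn2r ?nnegrE // (le_trans _ dk_le).
Qed.

End NormalContraction.

(* MathComp's spectral theorem needs an algebraically closed field, hence the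
   detour through R[i]. *)
Section SymmetricContraction.
Context {R : rcfType} {N : nat} {A : 'M[R]_N}.
Context {l0 b mu : R} {lc : seq R} {u : 'rV[R]_N}.
Hypotheses (A_sym : A^T = A)
  (A_char : char_poly A = \prod_(l <- l0 :: lc) ('X - l%:P))
  (lc_small : {in lc, forall l, `|l| <= b}) (mu_large : b < `|mu|)
  (u_eigen : u *m A = mu *: u) (u_neq0 : u != 0).

Local Notation toC := (real_complex R).

Let toC_conj (x : R) : (toC x)^* = toC x. Proof. exact: conjc_real. Qed.

Let toC_norm (x : R) : `|toC x| = toC `|x|.
Proof. by rewrite normc_def /= expr0n /= addr0 sqrtr_sqr. Qed.

Let dotmx_toC (x y : 'rV[R]_N) :
  '[map_mx toC x, map_mx toC y] = toC (\sum_i x 0 i * y 0 i).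
Proof. by rewrite dotmx_sum rmorph_sum; apply: eq_bigr => i _; rewrite !mxE toC_conj rmorphM. Qed.

Lemma sym_contraction (y : 'rV[R]_N) : \sum_i y 0 i * u 0 i = 0 ->
  \sum_i (y *m A) 0 i ^+ 2 <= b ^+ 2 * \sum_i y 0 i ^+ 2.
Proof.
move=> y_ortho; pose Ac := map_mx toC A.
have Ac_normal : Ac \is normalmx.
  apply/normalmxP; suff -> : Ac^t* = Ac by [].
  by rewrite -map_trmx -map_mx_comp (eq_map_mx _ toC_conj) /= map_trmx A_sym.
have Ac_char : char_poly Ac = \prod_(l <- map toC (l0 :: lc)) ('X - l%:P).
  by rewrite -map_char_poly A_char map_prod_XsubC big_map.
have lc_smallC : {in map toC lc, forall l, `|l| <= toC b}.
  by move=> _ /mapP[l /lc_small l_small ->]; rewrite toC_norm lecR.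
have mu_largeC : toC b < `|toC mu| by rewrite toC_norm ltcR.
have u_eigenC : map_mx toC u *m Ac = toC mu *: map_mx toC u.
  by rewrite -map_mxM u_eigen map_mxZ.
have u_neq0C : map_mx toC u != 0 by rewrite map_mx_eq0.
have := normal_contraction Ac_normal Ac_char lc_smallC mu_largeC u_eigenC u_neq0C.
move=> /(_ (map_mx toC y)); rewrite dotmx_toC y_ortho rmorph0 => /(_ erefl).
by rewrite -map_mxM !dotmx_toC -rmorphXn -rmorphM lecR.
Qed.

Lemma frobenius_contraction (b_ge0 : 0 <= b) {n} (D : 'M[R]_(N, n)) :
  u *m D = 0 -> frobenius (A *m D) <= b * frobenius D.
Proof.
move=> uD0; rewrite /frobenius -[b in X in _ <= X]ger0_norm // -sqrtr_sqr.
rewrite -sqrtrM ?sqr_ge0 // ler_wsqrtr // exchange_big [X in _ <= _ * X]exchange_big /=.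
rewrite mulr_sumr; apply: ler_sum => j _.
have uD0j : (u *m D) 0 j = 0 by rewrite uD0 mxE.
have ortho : \sum_i (col j D)^T 0 i * u 0 i = 0.
  by rewrite -[X in _ = X](uD0j) !mxE; apply: eq_bigr => i _; rewrite !mxE mulrC.
have AD i : ((col j D)^T *m A) 0 i = (A *m D) i j.
  rewrite !mxE; apply: eq_bigr => k _.
  by rewrite !mxE mulrC (_ : A k i = A i k) // -{1}A_sym mxE.
have := sym_contraction _ ortho.
rewrite (eq_bigr (fun i => (A *m D) i j ^+ 2)) => [|i _]; last by rewrite AD.
move=> /le_trans; apply; rewrite (eq_bigr (fun i => D i j ^+ 2)) => [|i _]; last by rewrite !mxE.
exact: lexx.
Qed.

End SymmetricContraction.

Lemma beta_of_behead {R : rcfType} {s : seq R} :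
  sorted (fun a b => b <= a) s -> {in behead s, forall l, `|l| <= beta_of s}.
Proof.
move=> s_sorted l l_in.
have nth_le := sorted_leq_nth (fun _ _ _ h1 h2 => le_trans h2 h1) lexx 0 s_sorted.
have size_gt1 : (1 < size s)%N by case: s l_in {s_sorted nth_le} => [|a []].
have i_lt : ((index l (behead s)).+1 < size s)%N by rewrite -ltn_predRL -size_behead index_mem.
have l_nth : l = nth 0 s (index l (behead s)).+1 by rewrite -nth_behead nth_index.
have top : l <= nth 0 s 1 by rewrite l_nth; apply: nth_le; rewrite ?inE.
have bot : nth 0 s (size s).-1 <= l.
  by rewrite l_nth; apply: nth_le; rewrite ?inE ?ltn_predL ?ltn_predRL ?(ltnW size_gt1).
have top_le : `|nth 0 s 1| <= beta_of s by rewrite le_max lexx.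
have bot_le : `|nth 0 s (size s).-1| <= beta_of s by rewrite le_max lexx orbT.
rewrite ler_norml; apply/andP; split.
  rewrite lerNl; apply: le_trans bot_le; rewrite -normrN.
  by apply: le_trans (ler_norm _); rewrite lerN2.
exact: le_trans (le_trans top (ler_norm _)) top_le.
Qed.

Lemma frobenius_mul_centering_le {R : rcfType} {N n : nat} (A : 'M[R]_N) (lam : seq R)
    (X : 'M[R]_(N, n)) :
  (0 < N)%N -> symmetric_mx A -> doubly_stochastic A -> sorted_eigenvalues A lam ->
  beta_of lam < 1 ->
  frobenius (A *m (centering *m X)) <= beta_of lam * frobenius (centering *m X).
Proof.
move=> N_gt0 A_sym [_ [_ col_sum]] [lam_size lam_sorted A_char] beta_lt1.
have lam_eq : lam = head 0 lam :: behead lam.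
  by case: lam lam_size {lam_sorted A_char beta_lt1} => // N0; rewrite -N0 in N_gt0.
have one_eigen : (const_mx 1 : 'rV[R]_N) *m A = 1 *: const_mx 1.
  apply/rowP => j; rewrite scale1r !mxE -[X in _ = X](col_sum j).
  by apply: eq_bigr => i _; rewrite mxE mul1r.
have one_neq0 : const_mx 1 != 0 :> 'rV[R]_N.
  by apply/negP => /eqP/rowP/(_ (Ordinal N_gt0)); rewrite !mxE => /eqP; rewrite oner_eq0.
rewrite lam_eq in A_char.
apply: (frobenius_contraction A_sym A_char (beta_of_behead lam_sorted) _ one_eigen one_neq0).
- by rewrite normr1.
- by rewrite le_max normr_ge0.
- by rewrite mulmxA const1_mul_centering ?mul0mx.
Qed.

Lemma affine_recurrence_le {R : realFieldType} {b c : R} {err : nat -> R} {k : nat} :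
  0 <= b -> b < 1 -> err 0%N <= c / (1 - b) ->
  (forall t, (t < k)%N -> err t.+1 <= b * err t + c) -> err k <= c / (1 - b).
Proof.
move=> b_ge0 b_lt1 err0 err_step; elim: k err_step => [//|k IHk] err_step.
apply: le_trans (err_step k (ltnSn k)) _.
have -> : c / (1 - b) = b * (c / (1 - b)) + c by field; rewrite subr_eq0 gt_eqF.
by rewrite lerD2r ler_wpM2l // IHk // => t /ltnW; apply: err_step.
Qed.

Section MonoDMFW.
Context {R : rcfType} {n N Q K : nat} {e : rel 'I_N} {A : 'M[R]_N}.
Context {v x : 'I_Q -> nat -> 'I_N -> 'rV[R]_n} {q : 'I_Q}.
Hypotheses (A_graph : graph_weight_matrix e A) (A_stoch : doubly_stochastic A)
  (x_iter : mono_dmfw_iterates K e A v x).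

Lemma dmfw_init_mx : \matrix_i x q 0%N i = 0.
Proof. by apply/row_matrixP => i; rewrite rowK row0 (proj1 (x_iter q)). Qed.

Lemma dmfw_iterate_mx t : (1 <= t <= K)%N ->
  \matrix_i x q t i = A *m \matrix_i x q t.-1 i + K%:R^-1 *: \matrix_i v q t i.
Proof.
move=> t_range; apply/row_matrixP => i.
rewrite linearD linearZ /= !rowK row_mul mulmx_sum_row (proj2 (x_iter q) t i t_range).
congr (_ + _); rewrite big_mkcond; apply: eq_bigr => j _; rewrite rowK mxE.
by case: ifPn => // /norP[not_edge not_loop]; rewrite (proj2 A_graph) ?scale0r.
Qed.

Lemma dmfw_centered_step t : (1 <= t <= K)%N ->
  centering *m \matrix_i x q t i =
  A *m (centering *m \matrix_i x q t.-1 i) + K%:R^-1 *: (centering *m \matrix_i v q t i).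
Proof.
move=> t_range; rewrite dmfw_iterate_mx // mulmxDr scalemxAr !mulmxA.
by rewrite doubly_stochastic_centeringC.
Qed.

End MonoDMFW.

Theorem lemma3 (R : rcfType) (n N Q K : nat)
  (Kset : pred 'rV[R]_n) (rK : R) (e : rel 'I_N) (A : 'M[R]_N) (lam : seq R)
  (v x : 'I_Q -> nat -> 'I_N -> 'rV[R]_n) :
  convex_set Kset -> bounded_set Kset -> is_max_norm Kset rK ->
  undirected_connected_graph e ->
  graph_weight_matrix e A ->
  symmetric_mx A -> doubly_stochastic A ->
  sorted_eigenvalues A lam -> beta_of lam < 1 ->
  (forall q k i, (1 <= k <= K)%N -> v q k i \in Kset) ->
  mono_dmfw_iterates K e A v x ->
  forall (q : 'I_Q) (k : nat), (1 <= k <= K)%N ->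
    Num.sqrt (\sum_(i < N) vnorm (x q k i - node_avg (x q k)) ^+ 2)
      <= Num.sqrt N%:R * rK / (K%:R * (1 - beta_of lam)).
Proof.
move=> _ _ [[x0 _ x0_norm] Kset_le] _ A_graph A_sym A_stoch lam_eig beta_lt1 v_in x_iter.
move=> q k /andP[_ k_le]; have rK_ge0 : 0 <= rK by rewrite -x0_norm sqrtr_ge0.
have [N0|N_gt0] := posnP N.
  rewrite big1 => [| [i i_lt] _]; last by exfalso; move: i_lt; rewrite N0.
  by rewrite N0 sqrtr0 !mul0r.
set beta := beta_of lam in beta_lt1 *.
have beta_ge0 : 0 <= beta by rewrite le_max normr_ge0.
pose c := K%:R^-1 * (Num.sqrt N%:R * rK).
pose err t := frobenius (centering *m \matrix_(i < N) x q t i).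
have err0 : err 0%N <= c / (1 - beta).
  rewrite /err (dmfw_init_mx x_iter) mulmx0 frobenius0 divr_ge0 ?subr_ge0 ?(ltW beta_lt1) //.
  by rewrite mulr_ge0 ?mulr_ge0 ?invr_ge0 ?sqrtr_ge0.
have err_step t : (t < k)%N -> err t.+1 <= beta * err t + c.
  move=> t_lt_k; have t_range : (1 <= t.+1 <= K)%N by rewrite ltn0Sn (leq_trans t_lt_k).
  rewrite /err (dmfw_centered_step A_graph A_stoch x_iter) //.
  apply: le_trans (frobeniusD _ _) _; rewrite frobeniusZ ?invr_ge0 ?ler0n //.
  apply: lerD; first exact: frobenius_mul_centering_le.
  rewrite ler_wpM2l ?invr_ge0 ?ler0n //; apply: le_trans (frobenius_centering_le _) _.
  by apply: frobenius_le_rows => // i; rewrite rowK Kset_le ?v_in.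
under eq_bigr do rewrite -row_centering_mul.
rewrite -frobenius_rows -/(err k).
apply: le_trans (affine_recurrence_le beta_ge0 beta_lt1 err0 err_step) _.
by rewrite /c invfM [X in _ <= X]mulrA [X in _ <= X * _]mulrC.
Qed.
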